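(* Let $\mathcal{A}$ be a GVA over an infinite alphabet $\Sigma$ with $n$ variables and with set of constants $\Sigma_{\mathcal{A}}=\{c_1,\ldots,c_k\}$. Let $a_1,\ldots,a_n$ be pairwise distinct letters of $\Sigma\setminus\Sigma_{\mathcal{A}}$ and let $\boldsymbol{\Sigma}=\{a_1,\ldots,a_n,c_1,\ldots,c_k\}$. Then $L(\mathcal{A})\neq\emptyset$ if and only if $L(\mathcal{A})\cap\boldsymbol{\Sigma}^{\star}\neq\emptyset$.
   Context: A guard over a set of variables $\mathcal{X}$ (disjoint from $\Sigma$) is built by the grammar $g ::= \mathit{true} \mid \alpha=\beta \mid \alpha\neq\beta \mid g\wedge g$ with $\alpha,\beta\in\Sigma\cup\mathcal{X}$. A GVA is a tuple $\mathcal{A}=\langle\Sigma,\mathcal{X},Q,Q_0,\delta,F,\kappa\rangle$ where $\mathcal{X}$ is a finite set of variables (its number of variables is $|\mathcal{X}|$), $Q$ a finite set of states, $Q_0\subseteq Q$ the initial states, $F\subseteq Q$ the accepting states, $\delta$ a finite set of transitions $q\xrightarrow{\alpha,g}q'$ with $q,q'\in Q$, $\alpha\in\Sigma\cup\mathcal{X}\cup\{\varepsilon\}$ and $g$ a guard, and $\kappa:\mathcal{X}\to 2^{Q}$ the refreshing function ($\kappa(x)$ is the set of states in which $x$ is freed). The constants $\Sigma_{\mathcal{A}}$ of $\mathcal{A}$ are the (finitely many) letters of $\Sigma$ occurring in its transitions (labels or guards). A configuration is a pair $(\sigma,q)$ with $q\in Q$ and $\sigma$ a partial map $\mathcal{X}\to\Sigma$.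 There is a step $(\sigma,q)\xrightarrow{a}(\sigma',q')$, $a\in\Sigma\cup\{\varepsilon\}$, if there is a transition $q\xrightarrow{\alpha,g}q'$ and a map $\gamma$ from the variables occurring in $\alpha$ or $g$ that are not in $\mathrm{dom}(\sigma)$ to $\Sigma$ such that, with $\rho=\sigma\uplus\gamma$ (extended to be the identity on letters), $\rho$ satisfies $g$, $a=\rho(\alpha)$ if $\alpha\neq\varepsilon$ and $a=\varepsilon$ if $\alpha=\varepsilon$, and $\sigma'$ is the restriction of $\rho$ to $\{x\in\mathrm{dom}(\rho) : q'\notin\kappa(x)\}$. A word $w\in\Sigma^{\star}$ is accepted if there is a sequence of steps from $(\emptyset,q_0)$ with $q_0\in Q_0$ to some $(\sigma,q_f)$ with $q_f\in F$ whose labels concatenate to $w$; $L(\mathcal{A})$ is the set of accepted words. *)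

From mathcomp Require Import all_boot.
From Stdlib Require List.
Set Implicit Arguments. Unset Strict Implicit. Unset Printing Implicit Defensive.

Section GVA.
Variables (Sigma : eqType) (X : finType).

Inductive atom := ALet of Sigma | AVar of X.

Inductive guard :=
| GTrue
| GEq of atom & atom
| GNeq of atom & atom
| GAnd of guard & guard.

(* a transition q --alpha,g--> q'; label None stands for epsilon *)
Record trans (Q : Type) := Trans {
  tr_src : Q; tr_lab : option atom; tr_guard : guard; tr_dst : Q }.

Record GVA := MkGVA {
  gQ : finType;
  gQ0 : {set gQ};
  gdelta : seq (trans gQ);
  gF : {set gQ};
  gkappa : X -> {set gQ} }.

Definition atom_lets (u : atom) : seq Sigma :=
  if u is ALet c then [:: c] else [::].
Fixpoint guard_lets (g : guard) : seq Sigma :=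
  match g with
  | GTrue => [::]
  | GEq u v | GNeq u v => atom_lets u ++ atom_lets v
  | GAnd g1 g2 => guard_lets g1 ++ guard_lets g2
  end.
Definition consts (A : GVA) : seq Sigma :=
  flatten [seq (if tr_lab t is Some u then atom_lets u else [::])
               ++ guard_lets (tr_guard t) | t <- gdelta A].

Definition atom_occ (x : X) (u : atom) : bool :=
  if u is AVar y then y == x else false.
Fixpoint guard_occ (x : X) (g : guard) : bool :=
  match g with
  | GTrue => false
  | GEq u v | GNeq u v => atom_occ x u || atom_occ x v
  | GAnd g1 g2 => guard_occ x g1 || guard_occ x g2
  end.

Definition valuation := X -> option Sigma.

Definition eval_atom (rho : valuation) (u : atom) : option Sigma :=
  match u with ALet c => Some c | AVar x => rho x end.

Fixpoint sat (rho : valuation) (g : guard) : Prop :=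
  match g with
  | GTrue => True
  | GEq u v => exists b, eval_atom rho u = Some b /\ eval_atom rho v = Some b
  | GNeq u v => exists b c, [/\ eval_atom rho u = Some b,
                              eval_atom rho v = Some c & b <> c]
  | GAnd g1 g2 => sat rho g1 /\ sat rho g2
  end.

Definition config (A : GVA) := (valuation * gQ A)%type.

(* one step (sigma,q) --a--> (sigma',q'), a = None meaning epsilon.
   rho = sigma (+) gamma, where gamma is defined exactly on the variables
   occurring in alpha or g that are not in dom sigma. *)
Definition step (A : GVA) (c : config A) (a : option Sigma) (c' : config A) : Prop :=
  exists t, [/\ List.In t (gdelta A), tr_src t = c.2, tr_dst t = c'.2 &
  exists rho : valuation,
    [/\ (forall x, c.1 x <> None -> rho x = c.1 x),
        (forall x, c.1 x = None ->
           (rho x <> None <->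
            (match tr_lab t with Some u => atom_occ x u | None => false end
             || guard_occ x (tr_guard t)))),
        sat rho (tr_guard t),
        (match tr_lab t with
         | Some u => a = eval_atom rho u /\ a <> None
         | None => a = None end) &
        (forall x, c'.1 x = if c'.2 \in gkappa A x then None else rho x)]].

Definition oseq (a : option Sigma) : seq Sigma :=
  if a is Some b then [:: b] else [::].

Inductive run (A : GVA) : config A -> seq Sigma -> config A -> Prop :=
| run_nil c : run c [::] c
| run_step c a c1 w c2 : step c a c1 -> run c1 w c2 -> run c (oseq a ++ w) c2.

Definition empty_val : valuation := fun _ => None.

Definition accepts (A : GVA) (w : seq Sigma) : Prop :=
  exists q0, q0 \in gQ0 A /\
  exists (s : valuation) (qf : gQ A), qf \in gF A /\ run (empty_val, q0) w (s, qf).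

End GVA.

From mathcomp Require Import all_boot.
From mathcomp Require Import zify.
Set Implicit Arguments. Unset Strict Implicit. Unset Printing Implicit Defensive.

(* A run is simulated step by step by a run over the reduced alphabet, keeping
   the invariant that the current valuation is the image of the original one
   under a renaming which fixes the constants, is injective on the stored
   letters and the constants, and sends stored non-constant letters to the
   a_i.  Guards only compare letters for (dis)equality, so such a renaming
   preserves their truth.  When a transition binds new letters, at most |X|
   letters are stored at once, hence enough a_i are unused by the image of
   the previous valuation to rename the new non-constant letters injectively.
   The infinitude of Sigma is only needed to pick the a_i, which the statement
   supplies. *)

Section Renaming.
Variables (Sigma : eqType) (X : finType).
Implicit Types (s rho : valuation Sigma X) (g : Sigma -> Sigma) (C : seq Sigma).

Definition vals s : seq Sigma := undup (pmap s (enum X)).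

Lemma valsP s b : reflect (exists x, s x = Some b) (b \in vals s).
Proof.
rewrite mem_undup mem_pmap.
by apply: (iffP mapP) => [[x _ e] | [x e]]; exists x; rewrite ?mem_enum.
Qed.

Lemma vals_uniq s : uniq (vals s).
Proof. exact: undup_uniq. Qed.

Lemma size_vals s : size (vals s) <= #|X|.
Proof.
rewrite cardE; apply: leq_trans (size_undup _) _.
by rewrite size_pmap count_size.
Qed.

Lemma vals_sub s rho :
  (forall x b, s x = Some b -> rho x = Some b) -> {subset vals s <= vals rho}.
Proof. by move=> s_rho b /valsP [x /s_rho e]; apply/valsP; exists x. Qed.

Definition rename g s : valuation Sigma X := fun x => omap g (s x).

Lemma eval_atom_mem C rho u b :
  all (mem C) (atom_lets u) -> eval_atom rho u = Some b -> b \in vals rho ++ C.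
Proof.
case: u => [c | x] /=; first by rewrite andbT => cC [<-]; rewrite mem_cat cC orbT.
by move=> _ e; rewrite mem_cat; apply/orP; left; apply/valsP; exists x.
Qed.

Lemma eval_atom_rename C g rho u : {in C, g =1 id} ->
  all (mem C) (atom_lets u) -> eval_atom (rename g rho) u = omap g (eval_atom rho u).
Proof. by move=> g_fix; case: u => [c | x] //=; rewrite andbT => /g_fix ->. Qed.

Lemma sat_rename C g rho gd :
  {in C, g =1 id} -> {in vals rho ++ C &, injective g} ->
  all (mem C) (guard_lets gd) -> sat rho gd -> sat (rename g rho) gd.
Proof.
move=> g_fix g_inj; elim: gd => [| u v | u v | g1 IH1 g2 IH2] //=;
  rewrite all_cat => /andP [C1 C2].
- by case=> b [eu ev]; exists (g b); rewrite !(eval_atom_rename _ g_fix) // eu ev.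
- case=> b [c [eu ev ne]]; exists (g b), (g c).
  rewrite !(eval_atom_rename _ g_fix) // eu ev; split=> // gbc; apply: ne.
  by apply: g_inj gbc; [exact: eval_atom_mem C1 eu | exact: eval_atom_mem C2 ev].
- by case=> h1 h2; split; [apply: IH1 | apply: IH2].
Qed.

End Renaming.

Section Simulation.
Variables (Sigma : eqType) (X : finType) (A : GVA Sigma X).
Variable a : 'I_#|X| -> Sigma.
Hypotheses (a_inj : injective a) (a_fresh : forall i, a i \notin consts A).

Definition bold : seq Sigma := [seq a i | i <- enum 'I_#|X|] ++ consts A.

Definition admissible (D : seq Sigma) (f : Sigma -> Sigma) :=
  [/\ {in consts A, f =1 id}, {in D ++ consts A &, injective f}
    & {in D, forall b, f b \in bold}].

Lemma admissible_sub D1 D2 f :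
  {subset D1 <= D2} -> admissible D2 f -> admissible D1 f.
Proof.
move=> sub [f_fix f_inj f_bold]; split=> // [b1 b2 b1D b2D | b /sub]; last exact: f_bold.
have subC : {subset D1 ++ consts A <= D2 ++ consts A}.
  by move=> b; rewrite !mem_cat => /orP [/sub -> | ->]; rewrite ?orbT.
by apply: f_inj; apply: subC.
Qed.

Lemma a_notin_consts i b : b \in consts A -> a i != b.
Proof. by move=> bC; apply: contraNneq (a_fresh i) => ->. Qed.

Section Extension.
Variables (s rho : valuation Sigma X) (f : Sigma -> Sigma).
Hypotheses (s_rho : forall x b, s x = Some b -> rho x = Some b)
           (f_adm : admissible (vals s) f).

Let old := [seq b <- vals s | b \notin consts A].
Let fresh := [seq b <- vals rho | b \notin vals s ++ consts A].
Let unused := [seq a i | i <- enum 'I_#|X| & a i \notin map f (vals s)].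
Let g b := if b \in fresh then nth b unused (index b fresh) else f b.

Lemma unused_uniq : uniq unused.
Proof. by rewrite map_inj_uniq // filter_uniq // enum_uniq. Qed.

(* Both the new and the old non-constant letters are stored in rho, and every
   a_i used by f is the image of an old one. *)
Lemma size_fresh : size fresh <= size unused.
Proof.
have [f_fix _ _] := f_adm.
have fresh_old : size fresh + size old <= #|X|.
  rewrite -size_cat; apply: leq_trans (size_vals rho); apply: uniq_leq_size.
    rewrite cat_uniq !filter_uniq ?vals_uniq //= andbT.
    apply/hasPn => b; rewrite !mem_filter mem_cat => /andP [_ bs].
    by rewrite bs.
  move=> b; rewrite mem_cat !mem_filter => /orP [/andP [_ //] | /andP [_ bs]].
  exact: vals_sub bs.
have used_old : count (predC (fun i => a i \notin map f (vals s))) (enum 'I_#|X|)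
                <= size old.
  rewrite -size_filter -(size_map a) -(size_map f old); apply: uniq_leq_size.
    by rewrite map_inj_uniq // filter_uniq // enum_uniq.
  move=> ai /mapP [i]; rewrite mem_filter /= negbK => /andP [/mapP [b bs fb] _] ->.
  have bC : b \notin consts A.
    by apply: contraNN (a_fresh i) => bC; rewrite fb f_fix.
  by rewrite fb map_f // mem_filter bC.
have := count_predC (fun i => a i \notin map f (vals s)) (enum 'I_#|X|).
rewrite size_enum_ord size_map size_filter; lia.
Qed.

Lemma index_fresh_lt b : b \in fresh -> index b fresh < size unused.
Proof. by move=> bN; apply: leq_trans size_fresh; rewrite index_mem. Qed.

Lemma g_fresh b : b \in fresh -> g b \in unused.
Proof. by move=> bN; rewrite /g bN mem_nth // index_fresh_lt. Qed.

Lemma g_not_fresh b : b \notin fresh -> g b = f b.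
Proof. by rewrite /g => /negbTE ->. Qed.

Lemma not_fresh_mem b :
  b \in vals rho ++ consts A -> b \notin fresh -> b \in vals s ++ consts A.
Proof.
rewrite mem_filter mem_cat => /orP [br | bC]; last by rewrite mem_cat bC orbT.
by rewrite br andbT negbK.
Qed.

Lemma unused_neq c b : c \in unused -> b \in vals s ++ consts A -> c != f b.
Proof.
have [f_fix _ _] := f_adm.
case/mapP=> i; rewrite mem_filter /= => /andP [fresh_i _] ->.
rewrite mem_cat => /orP [bs | bC]; last by rewrite f_fix // a_notin_consts.
by apply: contraNneq fresh_i => ->; rewrite map_f.
Qed.

Lemma admissible_extension :
  exists2 g, admissible (vals rho) g & {in vals s, g =1 f}.
Proof.
have [f_fix f_inj f_bold] := f_adm.
have g_fix : {in consts A, g =1 id}.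
  by move=> b bC; rewrite g_not_fresh ?f_fix // mem_filter mem_cat bC orbT.
exists g; last by move=> b bs; rewrite g_not_fresh // mem_filter mem_cat bs.
split=> //.
- move=> b1 b2 b1D b2D.
  case: (boolP (b1 \in fresh)) => b1N; case: (boolP (b2 \in fresh)) => b2N.
  + rewrite /g b1N b2N (set_nth_default b1 b2) ?index_fresh_lt // => /eqP.
    by rewrite nth_uniq ?unused_uniq ?index_fresh_lt // => /eqP; apply: index_inj.
  + rewrite (g_not_fresh b2N) => /eqP; apply: contraTeq => _.
    exact: unused_neq (g_fresh b1N) (not_fresh_mem b2D b2N).
  + rewrite (g_not_fresh b1N) => /esym/eqP; apply: contraTeq => _.
    exact: unused_neq (g_fresh b2N) (not_fresh_mem b1D b1N).
  + rewrite !g_not_fresh //; apply: f_inj; exact: not_fresh_mem.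
- move=> b br; case: (boolP (b \in fresh)) => bN.
    by case/mapP: (g_fresh bN) => i _ ->; rewrite mem_cat map_f ?mem_enum.
  have := not_fresh_mem (_ : b \in vals rho ++ consts A) bN.
  rewrite mem_cat br => /(_ isT); rewrite mem_cat => /orP [bs | bC].
    by rewrite g_not_fresh ?f_bold.
  by rewrite g_fix // mem_cat bC orbT.
Qed.

End Extension.

Definition related (s s' : valuation Sigma X) :=
  exists2 f, admissible (vals s) f & s' =1 rename f s.

Definition tr_lets (t : trans Sigma X (gQ A)) : seq Sigma :=
  (if tr_lab t is Some u then atom_lets u else [::]) ++ guard_lets (tr_guard t).

Lemma tr_lets_consts t : List.In t (gdelta A) -> all (mem (consts A)) (tr_lets t).
Proof.
rewrite /consts; elim: (gdelta A) => //= t' ts IH [<- | /IH t_C];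
  apply/allP => b bt; rewrite inE mem_cat -/(tr_lets _).
  by rewrite bt.
by apply/orP; right; exact: (allP t_C b bt).
Qed.

Lemma step_sim (c c1 : config A) o s' :
  step c o c1 -> related c.1 s' ->
  exists o' s1', [/\ step ((s', c.2) : config A) o' ((s1', c1.2) : config A),
                     related c1.1 s1' & all (mem bold) (oseq o')].
Proof.
case: c c1 => s q [s1 q1] [t [t_in /= t_src t_dst]].
case=> rho [rho_ext rho_dom rho_sat rho_lab s1_def] [f f_adm s'_def] /=.
have s_rho x b : s x = Some b -> rho x = Some b by move=> e; rewrite rho_ext e.
have [g g_adm g_f] := admissible_extension s_rho f_adm.
have [g_fix g_inj g_bold] := g_adm.
have := tr_lets_consts t_in; rewrite /tr_lets all_cat => /andP [lab_C guard_C].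
have lab_eval u : tr_lab t = Some u ->
    o = eval_atom rho u /\ o <> None /\ eval_atom (rename g rho) u = omap g o.
  move=> lu; move: rho_lab lab_C; rewrite lu => -[-> ne] u_C.
  by rewrite (eval_atom_rename _ g_fix).
exists (omap g o), (fun x => if q1 \in gkappa A x then None else rename g rho x).
split.
- exists t; split=> //; exists (rename g rho); split=> //=.
  + move=> x; rewrite s'_def /rename; case e: (s x) => [b|] //= _.
    by rewrite (s_rho _ _ e) /= g_f //; apply/valsP; exists x.
  + move=> x; rewrite s'_def /rename; case e: (s x) => //= _.
    by rewrite -(rho_dom x e); case: (rho x).
  + exact: sat_rename g_fix g_inj guard_C rho_sat.
  + move: rho_lab; case lu: (tr_lab t) => [u|]; last by move=> ->.
    move=> _; have [_ [ne ->]] := lab_eval u lu; split=> //; by case: (o) ne.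
- exists g; last by move=> x; rewrite /rename s1_def; case: ifP.
  apply: admissible_sub g_adm; apply: vals_sub => x b.
  by rewrite s1_def; case: ifP.
- move: rho_lab; case lu: (tr_lab t) => [u|]; last by move=> ->.
  move=> _; have [-> [_ _]] := lab_eval u lu; move: lab_C; rewrite lu => u_C.
  case e: (eval_atom rho u) => [b|] //=; rewrite andbT.
  have := eval_atom_mem u_C e; rewrite mem_cat => /orP [br | bC].
    exact: g_bold.
  by rewrite g_fix // mem_cat bC orbT.
Qed.

Lemma run_sim (c c2 : config A) w : run c w c2 -> forall s', related c.1 s' ->
  exists w' s2', run ((s', c.2) : config A) w' ((s2', c2.2) : config A)
                 /\ all (mem bold) w'.
Proof.
elim=> {c w c2} [c | c o c1 w c2 c_c1 _ IH] s' rel.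
  by exists [::], s'; split => //; apply: run_nil.
have [o' [s1' [c_c1' rel1 o'_bold]]] := step_sim c_c1 rel.
have [w' [s2' [run' w'_bold]]] := IH _ rel1.
exists (oseq o' ++ w'), s2'; split; first exact: run_step c_c1' run'.
by rewrite all_cat o'_bold w'_bold.
Qed.

Lemma related_empty : related (@empty_val Sigma X) (@empty_val Sigma X).
Proof. by exists id => //; split=> // b /valsP []. Qed.

End Simulation.

Theorem mainTheorem4 (Sigma : eqType) (X : finType) (A : GVA Sigma X)
  (Sigma_infinite : forall s : seq Sigma, exists b, b \notin s)
  (a : 'I_#|X| -> Sigma)
  (a_inj : injective a)
  (a_fresh : forall i, a i \notin consts A) :
  (exists w, accepts A w) <->
  (exists w, accepts A w /\
     all (fun b => b \in [seq a i | i <- enum 'I_#|X|] ++ consts A) w).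
Proof.
split; last by case=> w [acc _]; exists w.
case=> w [q0 [q0_init [s [qf [qf_final run_w]]]]].
have [w' [s' [run_w' w'_bold]]] :=
  run_sim a_inj a_fresh run_w (related_empty A a).
exists w'; split; last exact: w'_bold.
by exists q0; split => //; exists s', qf.
Qed.
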